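(* With the setup of the context, let $\mu$ be a symmetric weight on $F$, and assume that $\overline G$ and $\overline H$ both satisfy the bunkbed conjecture. Then for all $x\in V(\overline G)$ and $y\in V(\overline H)$, $\mathbb P_{F,\mu}(x^-\sim_F y^+)\le \mathbb P_{F,\mu}(x^-\sim_F y^-)$.
   Context: All graphs are finite and simple. For a graph $G$, a weight is a function $\mu\colon E(G)\to[0,1]$; the associated edge-percolation probability space has sample space $\mathscr P(E(G))$, with $\mathbb P_{G,\mu}(X)=\prod_{e\in X}\mu(e)\prod_{e\notin X}(1-\mu(e))$ for $X\subseteq E(G)$ (edges independently open, edge $e$ with probability $\mu(e)$). For vertices $x,y$, $(x\sim_G y)$ is the event that $x$ and $y$ are joined by a path of open edges of $G$. The bunkbed graph $BB(G)=G\,\Box\,K_2$ has vertex set $V(G)\times\{0,1\}$, writing $x^-=(x,0)$, $x^+=(x,1)$, with edges $x^-y^-$ and $x^+y^+$ for every $xy\in E(G)$ and vertical edges $x^-x^+$ for every $x\in V(G)$. A weight $\mu$ on $BB(G)$ is symmetric if $\mu(x^-y^-)=\mu(x^+y^+)$ for every $xy\in E(G)$. A graph $G$ satisfies the bunkbed conjecture if for every symmetric weight $\mu$ on $BB(G)$ and all $x,y\in V(G)$, $\mathbb P_{BB(G),\mu}(x^-\sim y^-)\ge \mathbb P_{BB(G),\mu}(x^-\sim y^+)$. Setup: let $\overline F$ be a graph and $v\in V(\overline F)$ a cut vertex; let $V_1,\dots,V_k$ ($k\ge2$) be the vertex sets of the components of $\overline F\setminus\{v\}$, fix $I\subseteq\{1,\dots,k\}$,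 and set $\overline G=\overline F[\bigcup_{i\in I}V_i\cup\{v\}]$, $\overline H=\overline F[\bigcup_{i\notin I}V_i\cup\{v\}]$ (induced subgraphs). Let $F=BB(\overline F)$, $G=BB(\overline G)$, $H=BB(\overline H)$, regarded as subgraphs of $F$. *)

From HB Require Import structures.
From mathcomp Require Import all_boot all_order all_algebra.
From mathcomp Require Import reals.
Set Implicit Arguments. Unset Strict Implicit. Unset Printing Implicit Defensive.
Import Order.TTheory GRing.Theory Num.Theory.
Local Open Scope ring_scope.

Section Percolation.
Variables (R : realType) (U : finType).

Definition percP (E : {set {set U}}) (mu : {set U} -> R) (X : {set {set U}}) : R :=
  (\prod_(f in X) mu f) * \prod_(f in E :\: X) (1 - mu f).

Definition open_conn (X : {set {set U}}) (a b : U) : bool :=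
  connect (fun u w => [set u; w] \in X) a b.

Definition perc_conn (E : {set {set U}}) (mu : {set U} -> R) (a b : U) : R :=
  \sum_(X in powerset E) percP E mu X * (open_conn X a b)%:R.

Definition is_weight (E : {set {set U}}) (mu : {set U} -> R) : Prop :=
  forall f, f \in E -> 0 <= mu f <= 1.
End Percolation.

Definition edges_in (T : finType) (e : rel T) (A : {set T}) : {set {set T}} :=
  [set [set x; y] | x in A, y in A & e x y].

Section Graphs.
Variables (T : finType) (e : rel T).


(* bunkbed relation on T * bool : x^- = (x,false), x^+ = (x,true) *)
Definition bb_rel : rel (T * bool) :=
  fun u w => ((u.2 == w.2) && e u.1 w.1) || ((u.1 == w.1) && (u.2 != w.2)).

(* edge set of BB(G[A]) (which is the subgraph of BB induced on A x bool) *)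
Definition bb_edges (A : {set T}) : {set {set (T * bool)}} :=
  @edges_in (T * bool)%type bb_rel (setX A [set: bool]).

Definition bb_symmetric (R : realType) (A : {set T}) (mu : {set (T * bool)} -> R) : Prop :=
  forall x y, x \in A -> y \in A -> e x y ->
    mu [set (x, false); (y, false)] = mu [set (x, true); (y, true)].

Definition bunkbed_holds (R : realType) (A : {set T}) : Prop :=
  forall mu : {set (T * bool)} -> R,
    is_weight (bb_edges A) mu -> bb_symmetric A mu ->
    forall x y, x \in A -> y \in A ->
      perc_conn (bb_edges A) mu (x, false) (y, true)
      <= perc_conn (bb_edges A) mu (x, false) (y, false).

Definition conn_in (A : {set T}) (x y : T) : bool :=
  connect (fun u w => [&& u \in A, w \in A & e u w]) x y.

Definition components (A : {set T}) : {set {set T}} :=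
  [set [set y in A | conn_in A x y] | x in A].

Definition cut_vertex (v : T) : bool :=
  (#|components [set: T]| < #|components [set~ v]|)%N.
End Graphs.

From HB Require Import structures.
From mathcomp Require Import all_boot all_order all_algebra.
From mathcomp Require Import reals ring.
Import Order.TTheory GRing.Theory Num.Theory.
Set Implicit Arguments. Unset Strict Implicit. Unset Printing Implicit Defensive.
Local Open Scope ring_scope.

(* The edges of F are those of BB(Gbar) and of BB(Hbar) other than the vertical
   edge nu at v, plus nu itself, and the two halves share only v^- and v^+.  So
   whether x^- reaches y^- or y^+ is a boolean function of which of v^-, v^+
   the endpoints reach inside their halves, whether v^- and v^+ are joined
   inside a half, and whether nu is open.  Reflecting the two layers of BB(Hbar)
   preserves a symmetric weight and exchanges y^+ with y^- and v^+ with v^-;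
   comparing the two expansions term by term gives
     P(x^- ~ y^-) - P(x^- ~ y^+) = D_G(x) * D_H(y) * (1 - mu nu),
   where D_G(x) = P(x^- ~ v^-) - P(x^- ~ v^+) in BB(Gbar) with nu closed, and
   similarly for D_H(y).  Both factors are nonnegative by the bunkbed property
   of Gbar and Hbar. *)

Section OpenConn.
Variable U : finType.
Implicit Types (X Y : {set {set U}}) (V : {set U}) (a b t u w : U).

Definition edges_within X V := forall u w, [set u; w] \in X -> (u \in V) && (w \in V).

Lemma edges_withinS X Y V : X \subset Y -> edges_within Y V -> edges_within X V.
Proof. by move=> sXY YV u w /(subsetP sXY)/YV. Qed.

Lemma open_conn_sym X : symmetric (open_conn X).
Proof. by apply: sym_connect_sym => u w; rewrite setUC. Qed.

Lemma open_conn_refl X a : open_conn X a a.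
Proof. exact: connect0. Qed.

Lemma open_conn_trans X t a b : open_conn X a t -> open_conn X t b -> open_conn X a b.
Proof. exact: connect_trans. Qed.

Lemma open_conn_eqr X a b c : open_conn X b c -> open_conn X a b = open_conn X a c.
Proof.
move=> bc; apply/idP/idP => [ab | ac]; first exact: open_conn_trans ab bc.
by apply: open_conn_trans ac _; rewrite open_conn_sym.
Qed.

Lemma open_conn1 X a b : [set a; b] \in X -> open_conn X a b.
Proof. exact: connect1. Qed.

Lemma open_connS X Y a b : X \subset Y -> open_conn X a b -> open_conn Y a b.
Proof. by move=> sXY; apply: connect_sub => u w /(subsetP sXY)/open_conn1. Qed.

Lemma open_conn_ind X (P : U -> Prop) a b :
  (forall u w, [set u; w] \in X -> P u -> P w) -> P a -> open_conn X a b -> P b.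
Proof.
move=> stepP Pa /connectP[p pX ->]; elim: p a Pa pX => //= w p IHp u Pu.
by case/andP=> /stepP/(_ Pu); apply: IHp.
Qed.

Lemma open_conn_within X V a b : edges_within X V -> a \in V -> open_conn X a b -> b \in V.
Proof. by move=> XV; apply: (open_conn_ind (P := fun w => w \in V)) => u w /XV/andP[]. Qed.

Lemma open_conn_map (h : U -> U) X Y a b :
  (forall u w, [set u; w] \in X -> [set h u; h w] \in Y) ->
  open_conn X a b -> open_conn Y (h a) (h b).
Proof.
move=> hXY; apply: (open_conn_ind (P := fun w => open_conn Y (h a) (h w))).
  by move=> u w /hXY/open_conn1 huw /open_conn_trans; apply.
exact: open_conn_refl.
Qed.

Lemma open_conn_exit Z X V (B : {set U}) a b :
  edges_within X V ->
  (forall u w, [set u; w] \in Z :\: X -> u \in V -> u \in B) ->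
  a \in V -> open_conn Z a b ->
  open_conn X a b \/ exists2 t, t \in B & open_conn X a t /\ open_conn Z t b.
Proof.
move=> XV ZB aV.
apply: (open_conn_ind (P := fun w => open_conn X a w \/
  exists2 t, t \in B & open_conn X a t /\ open_conn Z t w)); last first.
  by left; apply: open_conn_refl.
move=> u w Zuw [Xau | [t tB [Xat Ztu]]]; last first.
  by right; exists t => //; split=> //; apply: open_conn_trans Ztu (open_conn1 Zuw).
have [Xuw | nXuw] := boolP ([set u; w] \in X).
  by left; apply: open_conn_trans Xau (open_conn1 Xuw).
right; exists u; last by split=> //; apply: open_conn1.
by apply: (ZB u w); [rewrite in_setD nXuw | apply: open_conn_within aV Xau].
Qed.
End OpenConn.

(* [glue_conn g1 g2 gc h1 h2 hc n]: [a] reaches [s1]/[s2] in the first piece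
   ([g1]/[g2]), [b] reaches them in the second ([h1]/[h2]), and [s1], [s2] are
   joined in the first piece, the second piece, or directly ([gc], [hc], [n]). *)
Definition glue_conn (g1 g2 gc h1 h2 hc n : bool) :=
  [|| g1 && h1, g2 && h2 | [&& g1 || g2, h1 || h2 & [|| n, gc | hc]]].

Lemma glue_connP (U : finType) (s1 s2 : U) (g h : U -> bool) gc hc n :
  reflect (exists t t', [/\ t \in [set s1; s2], t' \in [set s1; s2], g t, h t'
                          & (t == t') || [|| n, gc | hc]])
          (glue_conn (g s1) (g s2) gc (h s1) (h s2) hc n).
Proof.
apply: (iffP idP) => [|[t [t' [tS t'S gt ht' tt']]]].
  case/or3P=> [/andP[g1 h1] | /andP[g2 h2] | /and3P[/orP g12 /orP h12 m]].
  - by exists s1, s1; rewrite !inE !eqxx.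
  - by exists s2, s2; rewrite !inE !eqxx !orbT.
  - have [t tS gt] : exists2 t, t \in [set s1; s2] & g t.
      by case: g12; [exists s1 | exists s2]; rewrite // !inE eqxx ?orbT.
    have [t' t'S ht'] : exists2 t', t' \in [set s1; s2] & h t'.
      by case: h12; [exists s1 | exists s2]; rewrite // !inE eqxx ?orbT.
    by exists t, t'; rewrite m orbT.
case/orP: tt' => [/eqP tt' | m].
  by move: tS gt ht'; rewrite -tt' /glue_conn !inE => /orP[]/eqP-> -> ->; rewrite ?orbT.
move: tS t'S gt ht'; rewrite !inE /glue_conn m !andbT.
by case/orP=> /eqP-> /orP[]/eqP-> -> ->; rewrite ?orbT.
Qed.

Lemma glue_conn_swap (R : comPzRingType) (g1 g2 gc h1 h2 hc n : bool) :
  (gc -> g1 = g2) -> (hc -> h1 = h2) ->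
  (glue_conn g1 g2 gc h1 h2 hc n)%:R - (glue_conn g1 g2 gc h2 h1 hc n)%:R
    = (g1%:R - g2%:R) * (h1%:R - h2%:R) * (1 - n%:R) :> R.
Proof.
case: gc => [/(_ isT) -> | _]; case: hc => [/(_ isT) -> | _];
  by case: g1; case: g2; case: h1; case: h2; case: n; rewrite /= ?mulr1n ?mulr0n; ring.
Qed.

Section Gluing.
Variables (U : finType) (V1 V2 : {set U}) (s1 s2 : U).
Let S := [set s1; s2].
Hypotheses (s1V1 : s1 \in V1) (s1V2 : s1 \in V2).
Hypothesis V12S : forall u, u \in V1 -> u \in V2 -> u \in S.
Variables X1 X2 X3 : {set {set U}}.
Hypotheses (X1V1 : edges_within X1 V1) (X2V2 : edges_within X2 V2).
Hypothesis X3S : X3 \subset [set S].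

Let Z := X1 :|: X2 :|: X3.
Let m := [|| S \in X3, open_conn X1 s1 s2 | open_conn X2 s1 s2].

Lemma glue_subset1 : X1 \subset Z.
Proof. by rewrite /Z -setUA subsetUl. Qed.

Lemma glue_subset2 : X2 \subset Z.
Proof. by rewrite /Z -setUA setUCA subsetUl. Qed.

Lemma glue_edgeP u w : [set u; w] \in Z ->
  [\/ [set u; w] \in X1, [set u; w] \in X2 | [set u; w] \in X3].
Proof. by rewrite !inE => /orP[/orP[]|]; [constructor 1 | constructor 2 | constructor 3]. Qed.

Lemma glue_X3 u w : [set u; w] \in X3 -> [set u; w] = S.
Proof. by move/(subsetP X3S); rewrite inE => /eqP. Qed.

Lemma mem_glue_X3 u w : [set u; w] \in X3 -> u \in S.
Proof. by move/glue_X3 <-; rewrite set21. Qed.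

Lemma glue_exit1 u w : [set u; w] \in Z :\: X1 -> u \in V1 -> u \in S.
Proof.
rewrite in_setD => /andP[nX1 /glue_edgeP[|/X2V2/andP[uV2 _] uV1|/mem_glue_X3//]].
  by rewrite (negPf nX1).
exact: V12S.
Qed.

Lemma glue_exit2 u w : [set u; w] \in Z :\: X2 -> u \in V2 -> u \in S.
Proof.
rewrite in_setD => /andP[nX2 /glue_edgeP[/X1V1/andP[uV1 _] uV2||/mem_glue_X3//]].
  exact: V12S.
by rewrite (negPf nX2).
Qed.

Lemma glue_meet1 u : u \in V1 -> open_conn X2 s1 u -> (u == s1) || m.
Proof.
move=> uV1 c; have := V12S uV1 (open_conn_within X2V2 s1V2 c).
by rewrite !inE => /orP[-> // | /eqP us2]; rewrite /m -us2 c !orbT.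
Qed.

Lemma glue_meet2 u : u \in V2 -> open_conn X1 s1 u -> (u == s1) || m.
Proof.
move=> uV2 c; have := V12S (open_conn_within X1V1 s1V1 c) uV2.
by rewrite !inE => /orP[-> // | /eqP us2]; rewrite /m -us2 c !orbT.
Qed.

(* Until [m] is established, whatever [s1] reaches it reaches inside one piece. *)
Lemma glue_bridge : open_conn Z s1 s2 -> m.
Proof.
move=> Zs12.
suff : [|| open_conn X1 s1 s2, open_conn X2 s1 s2 | m].
  by case/or3P=> // c; rewrite /m c !orbT.
apply: (open_conn_ind (P := fun w => [|| open_conn X1 s1 w, open_conn X2 s1 w | m])) Zs12;
  last by rewrite open_conn_refl.
move=> u w /glue_edgeP[X1uw | X2uw | X3uw] /or3P[c1 | c2 | ->]; rewrite ?orbT //.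
- by rewrite (open_conn_trans c1 (open_conn1 X1uw)).
- have /andP[uV1 _] := X1V1 X1uw.
  case/orP: (glue_meet1 uV1 c2) => [/eqP us1 | ->]; last by rewrite !orbT.
  by rewrite -us1 (open_conn1 X1uw).
- have /andP[uV2 _] := X2V2 X2uw.
  case/orP: (glue_meet2 uV2 c1) => [/eqP us1 | ->]; last by rewrite !orbT.
  by rewrite -us1 (open_conn1 X2uw) orbT.
- by rewrite (open_conn_trans c2 (open_conn1 X2uw)) orbT.
- by rewrite /m -(glue_X3 X3uw) X3uw !orbT.
- by rewrite /m -(glue_X3 X3uw) X3uw !orbT.
Qed.

Lemma glue_connS t t' : t \in S -> t' \in S -> open_conn Z t t' = (t == t') || m.
Proof.
have mZ : m -> open_conn Z s1 s2.
  case/or3P=> c; first by apply: open_conn1; rewrite /Z inE c orbT.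
    exact: open_connS glue_subset1 c.
  exact: open_connS glue_subset2 c.
have Z12 : open_conn Z s1 s2 = (s1 == s2) || m.
  case: eqP => [<- | _]; first by rewrite open_conn_refl.
  by apply/idP/idP; [apply: glue_bridge | apply: mZ].
rewrite !inE => /orP[]/eqP-> /orP[]/eqP->; rewrite ?eqxx ?open_conn_refl //.
by rewrite open_conn_sym Z12 eq_sym.
Qed.

Lemma open_conn_glue a b : a \in V1 -> b \in V2 ->
  open_conn Z a b =
  glue_conn (open_conn X1 a s1) (open_conn X1 a s2) (open_conn X1 s1 s2)
            (open_conn X2 b s1) (open_conn X2 b s2) (open_conn X2 s1 s2)
            (S \in X3).
Proof.
move=> aV1 bV2.
apply/idP/(glue_connP _ _ (open_conn X1 a) (open_conn X2 b)) => [Zab|]; last first.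
  case=> t [t' [tS t'S Xat Xbt' tt']]; rewrite -(glue_connS tS t'S) in tt'.
  apply: open_conn_trans (open_connS glue_subset1 Xat) _.
  by apply: open_conn_trans tt' _; rewrite open_conn_sym (open_connS glue_subset2 Xbt').
have [Xab | [t tS [Xat Ztb]]] := open_conn_exit X1V1 glue_exit1 aV1 Zab.
  have bS : b \in S := V12S (open_conn_within X1V1 aV1 Xab) bV2.
  by exists b, b; rewrite Xab open_conn_refl eqxx.
rewrite open_conn_sym in Ztb.
have [Xbt | [t' t'S [Xbt' Zt't]]] := open_conn_exit X2V2 glue_exit2 bV2 Ztb.
  by exists t, t; rewrite Xat Xbt eqxx.
by exists t, t'; rewrite Xat Xbt' -glue_connS // open_conn_sym.
Qed.
End Gluing.

Section BigPowerset.
Variables (R : Type) (idx : R) (op : Monoid.com_law idx) (K : finType).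
Implicit Types (A B : {set K}) (F : {set K} -> R).

Lemma big_setU_disjoint A B (F : K -> R) : [disjoint A & B] ->
  \big[op/idx]_(i in A :|: B) F i = op (\big[op/idx]_(i in A) F i) (\big[op/idx]_(i in B) F i).
Proof. by move=> dAB; rewrite -bigU //; apply: eq_bigl => i; rewrite !inE. Qed.

Lemma big_powersetU A B F : [disjoint A & B] ->
  \big[op/idx]_(X in powerset (A :|: B)) F X =
  \big[op/idx]_(X1 in powerset A) \big[op/idx]_(X2 in powerset B) F (X1 :|: X2).
Proof.
move=> dAB; rewrite pair_big_dep /=.
rewrite (reindex_onto (fun p => p.1 :|: p.2) (fun X => (X :&: A, X :&: B))) /=; last first.
  by move=> X; rewrite powersetE -setIUr => /setIidPl.
apply: eq_bigl => -[X1 X2] /=; rewrite !powersetE.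
apply/andP/andP => [[_ /eqP[<- <-]] | [sX1 sX2]]; first by rewrite !subsetIr.
rewrite setUSS //; split=> //; rewrite !setIUl (setIidPl sX1) (setIidPl sX2).
have /disjoint_setI0-> : [disjoint X1 & B] := disjointWl sX1 dAB.
have /disjoint_setI0-> : [disjoint X2 & A] by rewrite disjoint_sym (disjointWr sX2 dAB).
by rewrite setU0 set0U.
Qed.

Lemma big_powerset1 (k : K) F :
  \big[op/idx]_(X in powerset [set k]) F X = op (F set0) (F [set k]).
Proof.
rewrite powerset1 big_setU1 ?big_set1 // inE eq_sym.
by apply/eqP=> /setP/(_ k); rewrite !inE eqxx.
Qed.
End BigPowerset.

Section PercMean.
Variables (R : realType) (U : finType).
Implicit Types (E A B X : {set {set U}}) (mu : {set U} -> R) (F G : {set {set U}} -> R).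

Definition perc_mean E mu F := \sum_(X in powerset E) percP E mu X * F X.

Lemma perc_connE E mu a b :
  perc_conn E mu a b = perc_mean E mu (fun X => (open_conn X a b)%:R).
Proof. by []. Qed.

Lemma eq_perc_mean E mu F G :
  (forall X, X \subset E -> F X = G X) -> perc_mean E mu F = perc_mean E mu G.
Proof. by move=> FG; apply: eq_bigr => X; rewrite powersetE => /FG->. Qed.

Lemma perc_meanB E mu F G :
  perc_mean E mu (fun X => F X - G X) = perc_mean E mu F - perc_mean E mu G.
Proof. by rewrite /perc_mean -sumrB; apply: eq_bigr => X _; rewrite mulrBr. Qed.

Lemma perc_meanZ E mu c F : perc_mean E mu (fun X => c * F X) = c * perc_mean E mu F.
Proof. by rewrite /perc_mean mulr_sumr; apply: eq_bigr => X _; rewrite mulrCA. Qed.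

Lemma perc_meanZr E mu c F : perc_mean E mu (fun X => F X * c) = perc_mean E mu F * c.
Proof. by rewrite mulrC -perc_meanZ; apply: eq_perc_mean => X _; rewrite mulrC. Qed.

Lemma perc_meanM mu A B F G :
  perc_mean A mu (fun X1 => perc_mean B mu (fun X2 => F X1 * G X2)) =
  perc_mean A mu F * perc_mean B mu G.
Proof. by rewrite -perc_meanZr; apply: eq_perc_mean => X1 _; apply: perc_meanZ. Qed.

Lemma percPU mu A B X1 X2 : [disjoint A & B] -> X1 \subset A -> X2 \subset B ->
  percP (A :|: B) mu (X1 :|: X2) = percP A mu X1 * percP B mu X2.
Proof.
move=> dAB sX1 sX2; rewrite /percP.
have /setDidPl AX2 : [disjoint A & X2] by rewrite (disjointWr sX2 dAB).
have /setDidPl BX1 : [disjoint B & X1] by rewrite disjoint_sym (disjointWl sX1 dAB).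
rewrite setDUl !setDUr AX2 BX1 (setIidPl (subsetDl _ _)) (setIidPr (subsetDl _ _)).
have dD : [disjoint A :\: X1 & B :\: X2] := disjointW (subsetDl _ _) (subsetDl _ _) dAB.
by rewrite !big_setU_disjoint ?(disjointW sX1 sX2 dAB) //= mulrACA.
Qed.

Lemma perc_meanU mu A B F : [disjoint A & B] ->
  perc_mean (A :|: B) mu F =
  perc_mean A mu (fun X1 => perc_mean B mu (fun X2 => F (X1 :|: X2))).
Proof.
move=> dAB; rewrite /perc_mean big_powersetU //.
apply: eq_bigr => X1; rewrite powersetE => sX1; rewrite mulr_sumr.
by apply: eq_bigr => X2; rewrite powersetE => sX2; rewrite percPU // mulrA.
Qed.

Lemma perc_mean_set1 mu k F :
  perc_mean [set k] mu F = (1 - mu k) * F set0 + mu k * F [set k].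
Proof.
by rewrite /perc_mean big_powerset1 /percP setD0 setDv !big_set1 !big_set0 /= mul1r mulr1.
Qed.

Lemma perc_mean_weight E mu mu' F :
  {in E, mu =1 mu'} -> perc_mean E mu F = perc_mean E mu' F.
Proof.
move=> eq_mu; apply: eq_bigr => X; rewrite powersetE => sX; congr (_ * _).
rewrite /percP; congr (_ * _); apply: eq_bigr => f fX; rewrite eq_mu //.
  exact: subsetP sX _ fX.
by move: fX; rewrite inE => /andP[].
Qed.

Lemma perc_mean_close E mu k F : k \in E ->
  perc_mean E (fun f => if f == k then 0 else mu f) F = perc_mean (E :\ k) mu F.
Proof.
move=> kE; rewrite -{1}(setD1K kE) setUC perc_meanU; last first.
  by rewrite disjoint_sym disjoints1 !inE eqxx.
rewrite (perc_mean_weight (mu' := mu)); last by move=> f; rewrite in_setD1 => /andP[/negPf->].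
by apply: eq_perc_mean => X _; rewrite perc_mean_set1 eqxx subr0 mul1r mul0r addr0 setU0.
Qed.
End PercMean.

Lemma imset_set2 (aT rT : finType) (f : aT -> rT) x y : f @: [set x; y] = [set f x; f y].
Proof. by rewrite imsetU1 imset_set1. Qed.

Definition edge_image (U : finType) (h : U -> U) (X : {set {set U}}) :=
  [set h @: f | f : {set U} in X].

Section Involution.
Variables (U : finType) (h : U -> U).
Hypothesis hK : involutive h.
Implicit Types (X : {set {set U}}).

Lemma imsetK : involutive (fun f : {set U} => h @: f).
Proof. by move=> f; rewrite -imset_comp (eq_imset _ hK) imset_id. Qed.

Let imsetK_inj : injective (fun f : {set U} => h @: f) := can_inj imsetK.

Lemma open_conn_imset X a b :
  open_conn (edge_image h X) a b = open_conn X (h a) (h b).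
Proof.
apply/idP/idP => [c | c].
  apply: open_conn_map c => u w /imsetP[f fX uwf].
  by rewrite -imset_set2 uwf imsetK.
rewrite -[a]hK -[b]hK; apply: open_conn_map c => u w uwX.
by apply/imsetP; exists [set u; w]; rewrite ?imset_set2.
Qed.

Section Invariant.
Variables (R : realType) (E : {set {set U}}) (mu : {set U} -> R).
Hypothesis hE : {mono (fun f : {set U} => h @: f) : f / f \in E}.
Hypothesis hmu : {in E, forall f : {set U}, mu (h @: f) = mu f}.

Lemma subset_imset_mono X : (edge_image h X \subset E) = (X \subset E).
Proof.
apply/subsetP/subsetP => sX f.
  by move=> fX; rewrite -hE; apply/sX/imset_f.
by case/imsetP=> g /sX gE ->; rewrite hE.
Qed.

Lemma percP_imset X : X \subset E -> percP E mu (edge_image h X) = percP E mu X.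
Proof.
move=> sX; rewrite /percP.
have -> : E :\: edge_image h X = edge_image h (E :\: X).
  apply/setP => f; rewrite /edge_image -[f]imsetK !(mem_imset _ _ imsetK_inj) !inE.
  by rewrite (mem_imset _ _ imsetK_inj) [in LHS]hE.
rewrite /edge_image !big_imset; try by move=> f g _ _; apply: imsetK_inj.
congr (_ * _); apply: eq_bigr => f fX; rewrite hmu //.
  exact: subsetP sX _ fX.
by move: fX; rewrite inE => /andP[].
Qed.

Lemma perc_mean_imset F :
  perc_mean E mu F = perc_mean E mu (fun X => F (edge_image h X)).
Proof.
rewrite /perc_mean (reindex_inj (imset_inj imsetK_inj)) /=.
apply: eq_big => [X | X]; first by rewrite !powersetE subset_imset_mono.
by rewrite powersetE -/(edge_image h X) subset_imset_mono => sX; rewrite percP_imset.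
Qed.
End Invariant.
End Involution.

Definition bb_flip {T : Type} (p : T * bool) := (p.1, ~~ p.2).

Lemma bb_flipK {T : Type} : involutive (@bb_flip T).
Proof. by case=> a b; rewrite /bb_flip negbK. Qed.

Section Bunkbed.
Variables (T : finType) (e : rel T).
Local Notation U := (T * bool)%type.
Implicit Types (B : {set T}) (p q : U).

Definition bb_vertical (v : T) : {set U} := [set (v, false); (v, true)].

Lemma bb_edgesP B f : reflect
  (exists p q, [/\ f = [set p; q], p.1 \in B, q.1 \in B & bb_rel e p q])
  (f \in bb_edges e B).
Proof.
apply: (iffP imset2P) => [[p q] | [p [q [-> pB qB pq]]]].
  by rewrite !inE !andbT => pB /andP[qB pq] ->; exists p, q.
by exists p q; rewrite // !inE ?pB ?qB.
Qed.

Lemma mem_bb_edges B p q :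
  p.1 \in B -> q.1 \in B -> bb_rel e p q -> [set p; q] \in bb_edges e B.
Proof. by move=> pB qB pq; apply/bb_edgesP; exists p, q. Qed.

Lemma bb_edges_within B : edges_within (bb_edges e B) (setX B [set: bool]).
Proof.
move=> u w /bb_edgesP[p [q [uw pB qB _]]].
have: (u \in [set p; q]) && (w \in [set p; q]) by rewrite -uw !inE !eqxx ?orbT.
by rewrite !inE => /andP[] /orP[]/eqP-> /orP[]/eqP->; rewrite ?pB ?qB.
Qed.

Lemma bb_edgesS B B' : B \subset B' -> bb_edges e B \subset bb_edges e B'.
Proof.
move=> sBB'; apply/subsetP => f /bb_edgesP[p [q [-> pB qB pq]]].
by apply: mem_bb_edges; rewrite // (subsetP sBB').
Qed.

Lemma bb_edges_flip B : {mono (fun f : {set U} => bb_flip @: f) : f / f \in bb_edges e B}.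
Proof.
suff flipE f : f \in bb_edges e B -> bb_flip @: f \in bb_edges e B.
  by move=> f; apply/idP/idP => [/flipE|/flipE//]; rewrite imsetK //; apply: bb_flipK.
case/bb_edgesP=> p [q [-> pB qB pq]]; rewrite imset_set2.
by apply: mem_bb_edges => //; move: pq; rewrite /bb_rel /=; case: p.2; case: q.2.
Qed.

Lemma bb_symmetric_flip (R : realType) B (mu : {set U} -> R) : bb_symmetric e B mu ->
  {in bb_edges e B, forall f : {set U}, mu (bb_flip @: f) = mu f}.
Proof.
move=> sym f /bb_edgesP[[a b] [[c d] [-> /= aB /= cB]]]; rewrite imset_set2 /bb_flip /bb_rel /=.
case/orP=> [/andP[/eqP <- ac] | /andP[/eqP <- bd]].
  by case: b; rewrite /= (sym a c).
by move: bd; case: b; case: d => //= _; rewrite setUC.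
Qed.

Lemma bb_vertical_edge B v : v \in B -> bb_vertical v \in bb_edges e B.
Proof. by move=> vB; apply: mem_bb_edges; rewrite /bb_rel //= eqxx. Qed.

Lemma bb_vertical_flip v : bb_flip @: bb_vertical v = bb_vertical v.
Proof. by rewrite imset_set2 setUC. Qed.

Lemma bb_horizontal_neq_vertical a c b v : [set (a, b); (c, b)] != bb_vertical v.
Proof.
apply/eqP => /setP/(_ (v, ~~ b)); rewrite !inE !xpair_eqE.
by case: b; rewrite /= ?andbF eqxx.
Qed.

Lemma bunkbed_closed_vertical (R : realType) (mu : {set U} -> R) B v z :
  is_weight (bb_edges e [set: T]) mu -> bb_symmetric e [set: T] mu ->
  bunkbed_holds e R B -> v \in B -> z \in B ->
  0 <= perc_mean (bb_edges e B :\ bb_vertical v) mu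
         (fun X => (open_conn X (z, false) (v, false))%:R -
                   (open_conn X (z, false) (v, true))%:R).
Proof.
move=> hmu hsym bunk vB zB.
pose mu0 f := if f == bb_vertical v then 0 else mu f.
have mu0_weight : is_weight (bb_edges e B) mu0.
  move=> f fB; rewrite /mu0; case: eqP => _; first by rewrite lexx ler01.
  by apply: hmu; apply: subsetP fB; apply: bb_edgesS; apply: subsetT.
have mu0_sym : bb_symmetric e B mu0.
  move=> a c _ _ ac; rewrite /mu0 !(negPf (bb_horizontal_neq_vertical _ _ _ _)).
  exact: hsym.
have := bunk mu0 mu0_weight mu0_sym z v zB vB.
by rewrite -subr_ge0 !perc_connE -perc_meanB perc_mean_close ?bb_vertical_edge.
Qed.
End Bunkbed.

Section VertexSplit.
Variables (T : finType) (e : rel T).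
Hypothesis e_irr : irreflexive e.
Variables (G H : {set T}) (v : T).
Hypotheses (vG : v \in G) (vH : v \in H).
Hypothesis GH_cover : forall w, (w \in G) || (w \in H).
Hypothesis GH_meet : forall w, w \in G -> w \in H -> w = v.
Hypothesis GH_edge : forall w w', e w w' -> (w \in G) && (w' \in G) || (w \in H) && (w' \in H).

Local Notation U := (T * bool)%type.
Local Notation nu := (bb_vertical v).
Let E1 := bb_edges e G :\ nu.
Let E2 := bb_edges e H :\ nu.
Let V1 := setX G [set: bool].
Let V2 := setX H [set: bool].

Lemma split_meet u : u \in V1 -> u \in V2 -> u \in nu.
Proof.
case: u => a b; rewrite !in_setX !in_setT !andbT => aG aH.
by rewrite (GH_meet aG aH) !inE; case: b; rewrite eqxx ?orbT.
Qed.

Lemma split_edges : bb_edges e [set: T] = E1 :|: E2 :|: [set nu].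
Proof.
apply/setP => f; rewrite !inE; case: (eqVneq f nu) => [-> | fnu] /=.
  by rewrite bb_vertical_edge ?inE ?orbT.
rewrite orbF; apply/idP/idP => [/bb_edgesP[p [q [-> _ _ pq]]] | ].
  have [pqG | pqH] : (p.1 \in G) && (q.1 \in G) \/ (p.1 \in H) && (q.1 \in H).
  - case/orP: pq => [/andP[_ /GH_edge/orP[]] | /andP[/eqP pq _]]; [by left | by right |].
    by rewrite -pq andbb andbb; apply/orP.
  - by case/andP: pqG => pG qG; rewrite mem_bb_edges.
  - by case/andP: pqH => pH qH; rewrite [_ \in bb_edges e H]mem_bb_edges ?orbT.
by case/orP; apply/subsetP/bb_edgesS/subsetT.
Qed.

Lemma split_disjoint : [disjoint E1 & E2].
Proof.
rewrite -setI_eq0; apply/eqP/setP => f; rewrite /E1 /E2 !inE.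
apply/negP => /and3P[/andP[fnu fG] _ fH].
case/bb_edgesP: (fG) => p [q [fpq _ _ pq]]; rewrite fpq in fnu fG fH.
have /andP[pG qG] := bb_edges_within fG; have /andP[pH qH] := bb_edges_within fH.
have := split_meet pG pH; have := split_meet qG qH; rewrite !inE.
case/orP=> /eqP qv; case/orP=> /eqP pv; rewrite pv qv in fnu pq.
- by rewrite /bb_rel e_irr !eqxx in pq.
- by rewrite /bb_vertical setUC eqxx in fnu.
- by rewrite eqxx in fnu.
- by rewrite /bb_rel e_irr !eqxx in pq.
Qed.

Section Weights.
Variables (R : realType) (mu : {set U} -> R).
Hypothesis hmu : is_weight (bb_edges e [set: T]) mu.
Hypothesis hsym : bb_symmetric e [set: T] mu.

Lemma perc_conn_split a b : a \in V1 -> b \in V2 ->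
  perc_conn (bb_edges e [set: T]) mu a b =
  perc_mean E1 mu (fun X1 => perc_mean E2 mu (fun X2 => perc_mean [set nu] mu (fun X3 =>
    (glue_conn (open_conn X1 a (v, false)) (open_conn X1 a (v, true))
               (open_conn X1 (v, false) (v, true))
               (open_conn X2 b (v, false)) (open_conn X2 b (v, true))
               (open_conn X2 (v, false) (v, true)) (nu \in X3))%:R))).
Proof.
move=> aV1 bV2; rewrite perc_connE split_edges !perc_meanU; last 2 first.
- exact: split_disjoint.
- by rewrite disjoint_sym disjoints1 !inE !eqxx.
apply: eq_perc_mean => X1 sX1; apply: eq_perc_mean => X2 sX2.
apply: eq_perc_mean => X3 sX3; congr (_ %:R).
rewrite (@open_conn_glue _ V1 V2 (v, false) (v, true)) ?in_setX ?in_setT ?vG ?vH //.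
- exact: split_meet.
- by apply: (edges_withinS _ (@bb_edges_within _ e G)); apply: subset_trans sX1 (subsetDl _ _).
- by apply: (edges_withinS _ (@bb_edges_within _ e H)); apply: subset_trans sX2 (subsetDl _ _).
Qed.

Lemma perc_conn_split_diff x y : x \in G -> y \in H ->
  perc_conn (bb_edges e [set: T]) mu (x, false) (y, false) -
  perc_conn (bb_edges e [set: T]) mu (x, false) (y, true) =
  perc_mean E1 mu (fun X => (open_conn X (x, false) (v, false))%:R -
                            (open_conn X (x, false) (v, true))%:R) *
  perc_mean E2 mu (fun X => (open_conn X (y, false) (v, false))%:R -
                            (open_conn X (y, false) (v, true))%:R) *
  (1 - mu nu).
Proof.
move=> xG yH.
have E2_flip : {mono (fun f : {set U} => bb_flip @: f) : f / f \in E2}.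
  move=> f; rewrite !in_setD1 (@bb_edges_flip _ e H) -{1}(bb_vertical_flip v).
  by rewrite (inj_eq (can_inj (imsetK bb_flipK))).
have mu_flip : {in E2, forall f : {set U}, mu (bb_flip @: f) = mu f}.
  move=> f /setD1P[_ fH]; apply: bb_symmetric_flip hsym _ _.
  by apply: subsetP fH; apply/bb_edgesS/subsetT.
rewrite !perc_conn_split ?in_setX ?in_setT ?xG ?yH //.
under [X in _ - X = _]eq_perc_mean => X1 _ do
  rewrite (perc_mean_imset bb_flipK E2_flip mu_flip).
have -> : 1 - mu nu = perc_mean [set nu] mu (fun X3 => 1 - (nu \in X3)%:R).
  by rewrite perc_mean_set1 in_set0 in_set1 eqxx subr0 subrr mulr1 mulr0 addr0.
rewrite -mulrA -perc_meanZr -perc_meanB; apply: eq_perc_mean => X1 _.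
rewrite -perc_meanM -perc_meanZ -perc_meanB; apply: eq_perc_mean => X2 _.
rewrite -perc_meanZ -perc_meanB; apply: eq_perc_mean => X3 _.
rewrite !(open_conn_imset bb_flipK) /bb_flip /= [open_conn X2 (v, true) _]open_conn_sym.
by rewrite glue_conn_swap ?mulrA // => /open_conn_eqr.
Qed.

Lemma bunkbed_vertex_split x y :
  bunkbed_holds e R G -> bunkbed_holds e R H -> x \in G -> y \in H ->
  perc_conn (bb_edges e [set: T]) mu (x, false) (y, true)
  <= perc_conn (bb_edges e [set: T]) mu (x, false) (y, false).
Proof.
move=> bG bH xG yH; rewrite -subr_ge0 perc_conn_split_diff //.
apply: mulr_ge0; first apply: mulr_ge0.
- exact: bunkbed_closed_vertical.
- exact: bunkbed_closed_vertical.
- by have /andP[_] := hmu (bb_vertical_edge e (in_setT v)); rewrite subr_ge0.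
Qed.
End Weights.
End VertexSplit.

Section Components.
Variables (T : finType) (e : rel T).
Hypothesis e_sym : symmetric e.
Variable A : {set T}.

Definition comp_of x := [set y in A | conn_in e A x y].

Lemma conn_in_sym : symmetric (conn_in e A).
Proof.
apply: sym_connect_sym => u w.
by rewrite e_sym; case: (u \in A); case: (w \in A).
Qed.

Lemma comp_of_eq x w : w \in comp_of x -> comp_of w = comp_of x.
Proof.
rewrite inE => /andP[_ xw]; apply/setP => z; rewrite !inE; congr (_ && _).
apply/idP/idP => [wz | xz]; first exact: connect_trans xw wz.
by rewrite conn_in_sym in xw; apply: connect_trans xw xz.
Qed.

Lemma mem_comp_of w : w \in A -> w \in comp_of w.
Proof. by move=> wA; rewrite inE wA; apply: connect0. Qed.

Lemma comp_of_components w : w \in A -> comp_of w \in components e A.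
Proof. exact: imset_f. Qed.

Lemma mem_components C w : C \in components e A -> w \in C -> C = comp_of w.
Proof. by case/imsetP=> x _ -> /comp_of_eq. Qed.

Lemma mem_bigcup_components (J : {set {set T}}) w : J \subset components e A -> w \in A ->
  (w \in \bigcup_(C in J) C) = (comp_of w \in J).
Proof.
move=> sJ wA; apply/bigcupP/idP => [[C CJ wC] | wJ].
  by rewrite -(mem_components (subsetP sJ C CJ) wC).
by exists (comp_of w); rewrite ?mem_comp_of.
Qed.

Lemma comp_of_edge w w' : w \in A -> w' \in A -> e w w' -> comp_of w' = comp_of w.
Proof.
by move=> wA wA' ww'; apply: comp_of_eq; rewrite inE wA'; apply: connect1; rewrite wA wA'.
Qed.
End Components.

Section ComponentSplit.
Variables (T : finType) (e : rel T).
Hypothesis e_sym : symmetric e.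
Variables (v : T) (I : {set {set T}}).
Hypothesis hI : I \subset components e [set~ v].

Let Gbar := v |: \bigcup_(C in I) C.
Let Hbar := v |: \bigcup_(C in components e [set~ v] :\: I) C.
Let comp := comp_of e [set~ v].

Lemma component_split_memG w : w != v -> (w \in Gbar) = (comp w \in I).
Proof. by move=> wv; rewrite !inE (negPf wv) (mem_bigcup_components e_sym hI) // !inE. Qed.

Lemma component_split_memH w : w != v -> (w \in Hbar) = (comp w \notin I).
Proof.
move=> wv; rewrite !inE (negPf wv) (mem_bigcup_components e_sym (subsetDl _ I)) ?inE //.
by rewrite comp_of_components ?inE // andbT.
Qed.

Lemma component_split_cover w : (w \in Gbar) || (w \in Hbar).
Proof.
case: (eqVneq w v) => [-> | wv]; first by rewrite !inE eqxx.
by rewrite component_split_memG // component_split_memH // orbN.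
Qed.

Lemma component_split_meet w : w \in Gbar -> w \in Hbar -> w = v.
Proof.
case: (eqVneq w v) => // wv.
by rewrite component_split_memG // component_split_memH // => ->.
Qed.

Lemma component_split_edge w w' : e w w' ->
  (w \in Gbar) && (w' \in Gbar) || (w \in Hbar) && (w' \in Hbar).
Proof.
have vGH : (v \in Gbar) && (v \in Hbar) by rewrite !inE !eqxx.
move=> ww'; case: (eqVneq w v) => [-> | wv].
  by case/andP: vGH => -> ->; apply: component_split_cover.
case: (eqVneq w' v) => [-> | w'v].
  by case/andP: vGH => -> ->; rewrite !andbT component_split_cover.
rewrite !component_split_memG // !component_split_memH //.
have -> : comp w' = comp w by apply: (comp_of_edge e_sym) ww'; rewrite !inE.
by case: (comp w \in I).
Qed.
End ComponentSplit.

Theorem lemma3p4 (R : realType) (T : finType) (e : rel T)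
    (e_sym : symmetric e) (e_irr : irreflexive e)
    (v : T) (hcut : cut_vertex e v)
    (I : {set {set T}}) (hI : I \subset components e [set~ v])
    (mu : {set (T * bool)} -> R)
    (hmu : is_weight (bb_edges e [set: T]) mu)
    (hsym : bb_symmetric e [set: T] mu) :
  let Gbar := v |: \bigcup_(C in I) C in
  let Hbar := v |: \bigcup_(C in components e [set~ v] :\: I) C in
  bunkbed_holds e R Gbar -> bunkbed_holds e R Hbar ->
  forall x y, x \in Gbar -> y \in Hbar ->
    perc_conn (bb_edges e [set: T]) mu (x, false) (y, true)
    <= perc_conn (bb_edges e [set: T]) mu (x, false) (y, false).
Proof.
move=> Gbar Hbar bG bH x y xG yH.
have vG : v \in Gbar by rewrite !inE eqxx.
have vH : v \in Hbar by rewrite !inE eqxx.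
exact: (bunkbed_vertex_split e_irr vG vH (component_split_cover e_sym hI)
          (component_split_meet e_sym hI) (component_split_edge e_sym hI) hmu hsym bG bH xG yH).
Qed.
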